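(* Let $E_2$ be a para-Hilbert space and let $E_1=(X_{E_1},H_{E_1},Y_{E_1})$ be a split subspace of $E_2$. Then $i_{E_2}(X_{E_1})$ is dense in $H_{E_1}$ and $j_{E_2}(H_{E_1})$ is dense in $Y_{E_1}$.
   Context: A para-Hilbert space $E$ consists of Banach spaces $X_E,Y_E$, a Hilbert space $H_E$ with inner product and Riesz isomorphism $I_E\colon H_E\to H_E'$, bounded linear injections with dense image $i_E\colon X_E\to H_E$, $j_E\colon H_E\to Y_E$, and an isomorphism of Banach spaces $J_E\colon X_E\to Y_E'$ with $j_E'\circ J_E=I_E\circ i_E$ ($'$ denotes duals and dual operators). A morphism $P\colon E\to E$ is a triple of bounded linear operators $X_P,H_P,Y_P$ on $X_E,H_E,Y_E$ with $i_EX_P=H_Pi_E$, $j_EH_P=Y_Pj_E$. A triple $E_1=(X_{E_1},H_{E_1},Y_{E_1})$ of split (complemented) closed subspaces $X_{E_1}\subset X_{E_2}$, $H_{E_1}\subset H_{E_2}$, $Y_{E_1}\subset Y_{E_2}$ with $i_{E_2}(X_{E_1})\subset H_{E_1}$ and $j_{E_2}(H_{E_1})\subset Y_{E_1}$ is a split subspace of $E_2$ if there is a morphism $P\colon E_2\to E_2$ with $PP=P$ and $X_P(X_{E_2})=X_{E_1}$, $H_P(H_{E_2})=H_{E_1}$, $Y_P(Y_{E_2})=Y_{E_1}$. *)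

From HB Require Import structures.
From mathcomp Require Import all_boot all_order all_algebra.
From mathcomp Require Import all_classical all_reals all_analysis.
Set Implicit Arguments. Unset Strict Implicit. Unset Printing Implicit Defensive.
Import Order.TTheory GRing.Theory Num.Theory.
Import numFieldNormedType.Exports.
Local Open Scope classical_set_scope.
Local Open Scope ring_scope.

Definition is_linear (R : realType) (U V : normedModType R) (f : U -> V) : Prop :=
  forall (a : R) (u v : U), f (a *: u + v) = a *: f u + f v.

Definition bounded_linear (R : realType) (U V : normedModType R) (f : U -> V) : Prop :=
  is_linear f /\ continuous f.

Definition lin_subspace (R : realType) (U : normedModType R) (A : set U) : Prop :=
  A 0 /\ forall (a : R) u v, A u -> A v -> A (a *: u + v).

Definition split_closed_subspace (R : realType) (U : normedModType R) (A : set U) : Prop :=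
  lin_subspace A /\ closed A /\
  exists B : set U, lin_subspace B /\ closed B /\ A `&` B = [set 0] /\
    forall u : U, exists a b, A a /\ B b /\ u = a + b.

Definition hilbert_inner (R : realType) (H : completeNormedModType R) (ip : H -> H -> R) : Prop :=
  (forall (a : R) (u v w : H), ip (a *: u + v) w = a * ip u w + ip v w) /\
  (forall u v : H, ip u v = ip v u) /\
  (forall u : H, ip u u = `|u| ^+ 2).

(* Y' : continuous linear functionals on Y. The Riesz map is I h = ip h (.).
   The dual map j' sends f in Y' to f \o j.
   J : X -> Y' is an isomorphism of Banach spaces (Y' with the operator norm):
   J x is a continuous linear functional, J is linear, bijective onto Y',
   bounded, with bounded inverse. *)
Definition para_hilbert (R : realType) (X H Y : completeNormedModType R)
  (ip : H -> H -> R) (i : X -> H) (j : H -> Y) (J : X -> Y -> R) : Prop :=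
  hilbert_inner ip /\
  bounded_linear i /\ injective i /\ dense (range i) /\
  bounded_linear j /\ injective j /\ dense (range j) /\
  (forall x : X, bounded_linear (J x)) /\
  (forall (a : R) (x1 x2 : X) (y : Y), J (a *: x1 + x2) y = a * J x1 y + J x2 y) /\
  injective J /\
  (forall f : Y -> R, bounded_linear f -> exists x : X, J x = f) /\
  (exists C : R, 0 < C /\ forall (x : X) (y : Y), `|J x y| <= C * `|x| * `|y|) /\
  (exists c : R, 0 < c /\ forall (x : X) (M : R),
      (forall y : Y, `|J x y| <= M * `|y|) -> c * `|x| <= M) /\
  (* j' o J = I o i *)
  (forall (x : X) (h : H), J x (j h) = ip (i x) h).

Definition ph_morphism (R : realType) (X H Y : completeNormedModType R)
  (i : X -> H) (j : H -> Y) (XP : X -> X) (HP : H -> H) (YP : Y -> Y) : Prop :=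
  bounded_linear XP /\ bounded_linear HP /\ bounded_linear YP /\
  (forall x, i (XP x) = HP (i x)) /\ (forall h, j (HP h) = YP (j h)).

Definition split_subspace (R : realType) (X H Y : completeNormedModType R)
  (i : X -> H) (j : H -> Y) (X1 : set X) (H1 : set H) (Y1 : set Y) : Prop :=
  split_closed_subspace X1 /\ split_closed_subspace H1 /\ split_closed_subspace Y1 /\
  i @` X1 `<=` H1 /\ j @` H1 `<=` Y1 /\
  exists (XP : X -> X) (HP : H -> H) (YP : Y -> Y),
    ph_morphism i j XP HP YP /\
    (forall x, XP (XP x) = XP x) /\ (forall h, HP (HP h) = HP h) /\
    (forall y, YP (YP y) = YP y) /\
    XP @` setT = X1 /\ HP @` setT = H1 /\ YP @` setT = Y1.

From HB Require Import structures.
From mathcomp Require Import all_boot all_order all_algebra.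
From mathcomp Require Import all_classical all_reals all_analysis.
Import numFieldNormedType.Exports.
Local Open Scope classical_set_scope.
Local Open Scope ring_scope.

(* The projection H_P is continuous and intertwines the dense inclusion:
   H_P (i x) = i (X_P x).  Continuity carries the density of i(X) in H to
   density of H_P(i(X)) = i(X_P(X)) = i(X_1) in H_P(H) = H_1; likewise one
   level down for j and Y_P. *)

Lemma dense_closureT {T : topologicalType} {S : set T} :
  dense S -> closure S = [set: T].
Proof.
move=> dS; apply/seteqP; split=> // p _ B; rewrite nbhsE => -[U [oU Up] UB].
have [q [Uq Sq]] := dS U (ex_intro _ p Up) oU.
by exists q; split; [exact: Sq | exact: UB].
Qed.

Lemma image_closure_subset {T U : topologicalType} {f : T -> U} (A : set T) :
  continuous f -> f @` closure A `<=` closure (f @` A).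
Proof.
move=> cf _ [x clx <-].
have closed_pre : closed (f @^-1` closure (f @` A)).
  by apply: preimage_closed => [y _|]; [exact: cf | exact: closed_closure].
have A_pre : A `<=` f @^-1` closure (f @` A).
  by move=> y Ay; apply: subset_closure; exists y.
by rewrite closureE in clx; exact: (smallest_sub closed_pre A_pre clx).
Qed.

Lemma range_subset_closure_intertwined {S S' T T' : topologicalType}
    {i : S -> T} {i' : S' -> T'} {Q : S -> S'} {P : T -> T'} :
  dense (range i) -> continuous P -> (forall x, i' (Q x) = P (i x)) ->
  range P `<=` closure (i' @` range Q).
Proof.
move=> di cP iQ.
have -> : i' @` range Q = P @` range i.
  by rewrite !image_comp; apply: eq_imagel => x _ /=.
by rewrite -[in range P](dense_closureT di); exact: image_closure_subset.
Qed.

Theorem lemma2p7 (R : realType) (X H Y : completeNormedModType R)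
  (ip : H -> H -> R) (i : X -> H) (j : H -> Y) (J : X -> Y -> R)
  (X1 : set X) (H1 : set H) (Y1 : set Y) :
  para_hilbert ip i j J ->
  split_subspace i j X1 H1 Y1 ->
  H1 `<=` closure (i @` X1) /\ Y1 `<=` closure (j @` H1).
Proof.
move=> [_ [_ [_ [di [_ [_ [dj _]]]]]]].
move=> [_ [_ [_ [_ [_ [XP [HP [YP [morph [_ [_ [_ [<- [<- <-]]]]]]]]]]]]]].
have [_ [[_ cHP] [[_ cYP] [iXP jHP]]]] := morph.
split.
  exact: (range_subset_closure_intertwined di cHP iXP).
exact: (range_subset_closure_intertwined dj cYP jHP).
Qed.
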